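(* Let $G$ be a graph of order $n(G)$. Then $\mathrm{sg_e}(G) = n(G)$ if and only if every vertex $u$ of $G$ has a dominant neighbor, i.e. a neighbor $v$ with $N[u] \subseteq N[v]$.
   Context: All graphs are finite, simple and connected. $N[u] = \{u\} \cup \{x : ux \in E(G)\}$ is the closed neighborhood of $u$. A set $S \subseteq V(G)$ is a strong edge geodetic set of $G$ if one can assign to every unordered pair $\{u,v\}$ of distinct vertices of $S$ either one shortest $u,v$-path $P_{uv}$ in $G$ or no path, in such a way that every edge of $G$ lies on at least one of the assigned paths. The strong edge geodetic number $\mathrm{sg_e}(G)$ is the minimum cardinality of a strong edge geodetic set of $G$. *)

From mathcomp Require Import all_boot.
Set Implicit Arguments. Unset Strict Implicit. Unset Printing Implicit Defensive.

Definition simple_graph (T : finType) (e : rel T) : Prop :=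
  symmetric e /\ irreflexive e.

Definition connected_graph (T : finType) (e : rel T) : Prop :=
  forall x y : T, connect e x y.

Definition closed_nbhd (T : finType) (e : rel T) (u : T) : pred T :=
  fun x => (x == u) || e u x.

(* A walk is given by its start vertex x and the list p of the following
   vertices (so the vertex sequence is x :: p, ending at last x p). *)
Definition is_shortest_path (T : finType) (e : rel T) (x : T) (p : seq T) : Prop :=
  path e x p /\
  forall q : seq T, path e x q -> last x q = last x p -> size p <= size q.

Definition edge_on (T : finType) (a b : T) (x : T) (p : seq T) : bool :=
  has (fun uv : T * T => (uv == (a, b)) || (uv == (b, a))) (zip (x :: p) p).

(* S is a strong edge geodetic set: there is an assignment f giving every
   unordered pair P = {u,v} of distinct vertices of S either no path (None)
   or one shortest u,v-path (Some (x, p), the vertex sequence x :: p whose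
   endpoints are exactly the two elements of P), such that every edge of the
   graph lies on some assigned path. *)
Definition strong_edge_geodetic (T : finType) (e : rel T) (S : {set T}) : Prop :=
  exists f : {set T} -> option (T * seq T),
    (forall (P : {set T}) (x : T) (p : seq T), f P = Some (x, p) ->
        [/\ P \subset S, #|P| = 2, x \in P, last x p \in P
          & (last x p != x /\ is_shortest_path e x p)]) /\
    (forall a b : T, e a b ->
        exists (P : {set T}) (x : T) (p : seq T),
          f P = Some (x, p) /\ edge_on a b x p).

Definition sge_is (T : finType) (e : rel T) (k : nat) : Prop :=
  (exists S : {set T}, strong_edge_geodetic e S /\ #|S| = k) /\
  (forall S : {set T}, strong_edge_geodetic e S -> k <= #|S|).

Definition has_dominant_neighbor (T : finType) (e : rel T) (u : T) : Prop :=
  exists v : T, e u v /\ {subset closed_nbhd e u <= closed_nbhd e v}.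

From mathcomp Require Import all_boot.

Set Implicit Arguments. Unset Strict Implicit. Unset Printing Implicit Defensive.

(* If every vertex u has a dominant neighbour v, then u lies in every strong
   edge geodetic set: the edge uv is on some assigned geodesic, u is not an
   endpoint of it, and the other neighbour of u on that geodesic is in
   N[u] ⊆ N[v], so the geodesic could be shortened through v. Hence V itself
   (with every edge as its own geodesic) is optimal. Conversely, if some u has
   no dominant neighbour, then V \ {u} is strong edge geodetic: each edge uw
   lies on a geodesic w-u-x, where x is a neighbour of u outside N[w]. *)

Lemma has_zip_split (T : Type) (P : pred (T * T)) (x : T) (p : seq T) :
  has P (zip (x :: p) p) -> exists p1 z p2, p = p1 ++ z :: p2 /\ P (last x p1, z).
Proof.
elim: p x => [|y p IHp] x //= /orP[Pxy | /IHp[p1 [z [p2 [-> Pz]]]]].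
  by exists [::], y, p.
by exists (y :: p1), z, p2.
Qed.

Lemma eq_set2 (T : finType) (a b c d : T) :
  [set a; b] = [set c; d] -> (c, d) = (a, b) \/ (c, d) = (b, a).
Proof.
move=> Eab.
have: c \in [set a; b] by rewrite Eab set21.
have: d \in [set a; b] by rewrite Eab set22.
have: a \in [set c; d] by rewrite -Eab set21.
have: b \in [set c; d] by rewrite -Eab set22.
move=> /set2P[] Eb /set2P[] Ea /set2P[] Ed /set2P[] Ec; subst; by [left | right].
Qed.

Lemma edge_onC (T : finType) (a b x : T) (p : seq T) :
  edge_on a b x p = edge_on b a x p.
Proof. by apply: eq_has => uv; rewrite orbC. Qed.

Section ShortestPaths.
Variables (T : finType) (e : rel T).

Lemma shortest_path_no_shortcut x p p1 w b p2 :
  is_shortest_path e x p -> p = p1 ++ w :: b :: p2 -> ~~ closed_nbhd e (last x p1) b.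
Proof.
move=> [xp shortest] Ep.
move: xp; rewrite Ep cat_path /= => /and4P[xp1 _ _ bp2].
apply/negP => /orP[/eqP bE | ab].
- have := shortest (p1 ++ p2); rewrite Ep !cat_path !last_cat !size_cat /= xp1 -bE bp2.
  by move=> /(_ isT erefl); rewrite leqNgt ltn_add2l ltnS leqnSn.
- have := shortest (p1 ++ b :: p2); rewrite Ep !cat_path !last_cat !size_cat /= xp1 ab bp2.
  by move=> /(_ isT erefl); rewrite leqNgt ltn_add2l ltnS leqnn.
Qed.

End ShortestPaths.

Section RouteAssignment.
Variables (T : finType) (C : rel T) (route : T -> T -> seq T).

Definition route_assignment (P : {set T}) : option (T * seq T) :=
  if [pick ab : T * T | C ab.1 ab.2 && (P == [set ab.1; ab.2])] is Some ab
  then Some (ab.1, route ab.1 ab.2) else None.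

Lemma route_assignmentP P x p : route_assignment P = Some (x, p) ->
  exists b, [/\ C x b, p = route x b & P = [set x; b]].
Proof.
rewrite /route_assignment; case: pickP => [[a b] /andP[ab /eqP PE] | _] //=.
by case=> <- <-; exists b.
Qed.

Lemma route_assignment_set2 a b : C a b -> exists c d,
  [/\ C c d, [set a; b] = [set c; d] & route_assignment [set a; b] = Some (c, route c d)].
Proof.
move=> ab; rewrite /route_assignment; case: pickP => [[c d] /andP[cd /eqP E] | none].
  by exists c, d.
by have := none (a, b); rewrite /= ab eqxx.
Qed.

End RouteAssignment.

Section SimpleGraph.
Variables (T : finType) (e : rel T).
Hypotheses (sym_e : symmetric e) (irr_e : irreflexive e).

Lemma closed_nbhdC a b : closed_nbhd e a b = closed_nbhd e b a.
Proof. by rewrite /closed_nbhd eq_sym sym_e. Qed.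

Lemma dominant_neighborP u :
  reflect (has_dominant_neighbor e u)
          [exists v, e u v && [forall y, closed_nbhd e u y ==> closed_nbhd e v y]].
Proof.
apply: (iffP existsP) => [[v /andP[uv /forallP dom]] | [v [uv dom]]].
  by exists v; split => // y /(implyP (dom y)).
by exists v; rewrite uv; apply/forallP => y; apply/implyP/dom.
Qed.

Lemma no_dominant_neighbor u w : ~ has_dominant_neighbor e u -> e u w ->
  exists2 x, e u x & ~~ closed_nbhd e w x.
Proof.
move=> nodom uw; have := introN (dominant_neighborP u) nodom.
rewrite negb_exists => /forallP/(_ w) {}nodom.
move: nodom; rewrite uw negb_forall => /existsP[x]; rewrite negb_imply.
case/andP => /orP[/eqP -> | ux] wx; last by exists x.
by rewrite /closed_nbhd sym_e uw orbT in wx.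
Qed.

Lemma shortest_path_edge x b : e x b -> is_shortest_path e x [:: b].
Proof.
move=> xb; split=> [|[|y q] //= _ bx]; first by rewrite /= xb.
by rewrite -bx irr_e in xb.
Qed.

Lemma shortest_path_cherry x u d : e u x -> e u d -> ~~ closed_nbhd e x d ->
  is_shortest_path e x [:: u; d].
Proof.
rewrite /closed_nbhd negb_or => ux ud /andP[dx xd].
split=> [|[|y [|z q]] //=]; first by rewrite /= sym_e ux ud.
- by move=> _ xE; rewrite xE eqxx in dx.
- by rewrite andbT => xy yE; rewrite -yE xy in xd.
Qed.

Lemma dominated_in_strong_edge_geodetic S u :
  has_dominant_neighbor e u -> strong_edge_geodetic e S -> u \in S.
Proof.
move=> [v [uv dom]] [f [f_geod f_cover]]; apply/negPn/negP => uS.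
have [P [x [p [fP on_p]]]] := f_cover u v uv.
have [PS _ xP pP [_ sp]] := f_geod _ _ _ fP.
have ux : u != x by apply: contraNneq uS => ->; apply: (subsetP PS).
have ulast : u != last x p by apply: contraNneq uS => ->; apply: (subsetP PS).
have [p1 [z [p2 [Ep]]]] := has_zip_split on_p.
rewrite !xpair_eqE => /orP[] /andP[/eqP u_p1 /eqP zE]; subst z.
- case/lastP: p1 Ep u_p1 => [|p1 a] Ep; first by move=> /= xE; rewrite xE eqxx in ux.
  rewrite last_rcons cat_rcons in Ep * => aE; subst a.
  have := shortest_path_no_shortcut sp Ep; rewrite closed_nbhdC => /negP; apply.
  apply: dom; rewrite unfold_in /closed_nbhd sym_e.
  by move: sp.1; rewrite Ep cat_path /= => /and3P[_ -> _]; rewrite orbT.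
- case: p2 Ep => [|b p2] Ep; first by rewrite Ep last_cat eqxx in ulast.
  have := shortest_path_no_shortcut sp Ep; rewrite u_p1 => /negP; apply.
  apply: dom; rewrite unfold_in /closed_nbhd.
  by move: sp.1; rewrite Ep cat_path /= => /and3P[_ _ /andP[-> _]]; rewrite orbT.
Qed.

Definition assigned_geodesic (S P : {set T}) (x : T) (p : seq T) : Prop :=
  [/\ P \subset S, #|P| = 2, x \in P, last x p \in P
    & last x p != x /\ is_shortest_path e x p].

Lemma assigned_geodesic_set2 (S : {set T}) x b p :
  x \in S -> b \in S -> last x p = b -> b != x -> is_shortest_path e x p ->
  assigned_geodesic S [set x; b] x p.
Proof.
move=> xS bS pb bx sp; rewrite /assigned_geodesic pb.
split; rewrite ?set21 ?set22 //; first by apply/subsetP => y /set2P[] ->.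
by rewrite cards2 eq_sym bx.
Qed.

Definition edge_within (S : {set T}) : rel T :=
  [rel a b | [&& e a b, a \in S & b \in S]].

Definition edge_assignment (S : {set T}) : {set T} -> option (T * seq T) :=
  route_assignment (edge_within S) (fun _ b => [:: b]).

Lemma edge_assignment_geodesic (S : {set T}) P x p :
  edge_assignment S P = Some (x, p) -> assigned_geodesic S P x p.
Proof.
case/route_assignmentP => b [/and3P[xb xS bS] -> ->].
apply: assigned_geodesic_set2 => //; last exact: shortest_path_edge.
by apply: contraTneq xb => ->; rewrite irr_e.
Qed.

Lemma edge_assignment_covers (S : {set T}) a b : e a b -> a \in S -> b \in S ->
  exists x p, edge_assignment S [set a; b] = Some (x, p) /\ edge_on a b x p.
Proof.
move=> ab aS bS; rewrite /edge_assignment; have abS : edge_within S a b by apply/and3P.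
have [c [d [_ /eq_set2 cdE ->]]] := route_assignment_set2 (fun _ b => [:: b]) abS.
by exists c, [:: d]; split=> //; case: cdE => [[-> ->] | [-> ->]];
  rewrite /edge_on /= !eqxx ?orbT.
Qed.

Lemma strong_edge_geodetic_setT : strong_edge_geodetic e [set: T].
Proof.
exists (edge_assignment [set: T]); split; first exact: edge_assignment_geodesic.
move=> a b ab; have [x [p [fP on_p]]] := edge_assignment_covers ab (in_setT a) (in_setT b).
by exists [set a; b], x, p.
Qed.

Lemma edge_assignment_nonedge (S : {set T}) w x :
  ~~ closed_nbhd e w x -> edge_assignment S [set w; x] = None.
Proof.
case E: edge_assignment => [[c q]|] // wx; exfalso.
have [b [/and3P[cb _ _] _ /eq_set2 [[cE bE] | [cE bE]]]] := route_assignmentP E.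
all: by move: wx; rewrite /closed_nbhd -cE -bE ?cb ?orbT // sym_e cb orbT.
Qed.

Section OffVertex.
Variable u : T.

Definition cherry_at : rel T :=
  [rel a b | [&& e u a, e u b & ~~ closed_nbhd e a b]].

Definition cherry_assignment : {set T} -> option (T * seq T) :=
  route_assignment cherry_at (fun _ b => [:: u; b]).

Definition off_vertex_assignment (P : {set T}) : option (T * seq T) :=
  if edge_assignment [set~ u] P is Some r then Some r else cherry_assignment P.

Lemma off_vertex_assignment_geodesic P x p :
  off_vertex_assignment P = Some (x, p) -> assigned_geodesic [set~ u] P x p.
Proof.
rewrite /off_vertex_assignment; case E: edge_assignment => [r|].
  by move=> rE; rewrite rE in E; apply: edge_assignment_geodesic E.
case/route_assignmentP => b [/and3P[ux ub xb] -> ->].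
have in_setC1 y : e u y -> y \in [set~ u].
  by rewrite !inE; apply: contraTneq => ->; rewrite irr_e.
apply: assigned_geodesic_set2; rewrite ?in_setC1 //; last exact: shortest_path_cherry.
by apply: contraNneq xb => ->; rewrite /closed_nbhd eqxx.
Qed.

Lemma off_vertex_assignment_covers w : ~ has_dominant_neighbor e u -> e u w ->
  exists P x p, off_vertex_assignment P = Some (x, p) /\ edge_on u w x p.
Proof.
move=> nodom uw; have [x ux wx] := no_dominant_neighbor nodom uw.
exists [set w; x].
rewrite /off_vertex_assignment edge_assignment_nonedge // /cherry_assignment.
have wxC : cherry_at w x by apply/and3P.
have [c [d [_ /eq_set2 cdE ->]]] := route_assignment_set2 (fun _ b => [:: u; b]) wxC.
by exists c, [:: u; d]; split=> //; case: cdE => [[-> ->] | [-> ->]];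
  rewrite /edge_on /= !eqxx ?orbT.
Qed.

Lemma strong_edge_geodetic_setC1 :
  ~ has_dominant_neighbor e u -> strong_edge_geodetic e [set~ u].
Proof.
move=> nodom; exists off_vertex_assignment.
split=> [|a b ab]; first exact: off_vertex_assignment_geodesic.
have [aE | au] := eqVneq a u.
  by subst a; apply: off_vertex_assignment_covers.
have [bE | bu] := eqVneq b u.
  subst b; rewrite sym_e in ab.
  have [P [x [p [fP on_p]]]] := off_vertex_assignment_covers nodom ab.
  by exists P, x, p; rewrite edge_onC.
have aS : a \in [set~ u] by rewrite !inE.
have bS : b \in [set~ u] by rewrite !inE.
have [x [p [fP on_p]]] := edge_assignment_covers ab aS bS.
by exists [set a; b], x, p; rewrite /off_vertex_assignment fP.
Qed.

End OffVertex.

End SimpleGraph.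

Theorem mainTheorem9 (T : finType) (e : rel T) :
  simple_graph e -> connected_graph e ->
  (sge_is e #|T| <-> forall u : T, has_dominant_neighbor e u).
Proof.
move=> [sym_e irr_e] _; split=> [[_ sge_min] u | dom].
  case: (dominant_neighborP e u) => // nodom; exfalso.
  have := sge_min _ (strong_edge_geodetic_setC1 sym_e irr_e nodom).
  by rewrite -cardsT (cardsD1 u) in_setT setTD add1n ltnn.
split=> [|S segS].
  by exists [set: T]; split; [exact: strong_edge_geodetic_setT | exact: cardsT].
rewrite -cardsT; apply/subset_leq_card/subsetP => u _.
exact: dominated_in_strong_edge_geodetic (dom u) segS.
Qed.
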